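(* Let $(\mathcal{X},\rho)$ be a metric space of unit diameter, let $\mathbb{X}=(X_n)_{n\ge0}$ be a process in $\mathcal{X}$ with nearest neighbor process $(\tilde X_n)_{n\ge1}$, and let $\mathbb{I}$ be an indicator process. Fix $n$, let $\mathcal{C}$ be a cover tree for the indicated instances $\mathbb{X}[\mathbb{I}_{<n}]$ (enumerated without duplicates in order of first indication), and let $\mathfrak{c}$ be a cover-tree neighbor map for $\mathcal{C}$. Assume $X_n\notin\mathbb{X}[\mathbb{I}_{<n}]$. Then \[\left\{\tilde X_n\in\mathbb{X}[\mathbb{I}_{<n}]\right\}\subset\bigcup_{B(a,r)\in\mathcal{C}}\left\{\rho(X_n,x)\ge r/2\ \text{for all }x\in\mathbb{X}_{<n},\ \text{and}\ \mathfrak{c}(X_n)=B(a,r)\right\}.\] Moreover, the event in the union indexed by $B=B(a,r)\in\mathcal{C}$ is contained in $E_n^{2B,r/2}$, where $2B=B(a,2r)$.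
   Context: $\mathbb{X}_{<n}=\{X_0,\dots,X_{n-1}\}$; $\tilde X_n\in\arg\min_{x\in\mathbb{X}_{<n}}\rho(X_n,x)$. An indicator process is a sequence $(I_n)_n$ of $\{0,1\}$-valued random variables; $\mathbb{X}[\mathbb{I}_{<n}]=\{X_m:m<n,\ I_m=1\}$. Dyadic cone: $\mathrm{cone}(x;L)=\{B(x,2^{-\ell}):\ell\ge L,\ \ell\in\mathbb{N}_0\}$ (open balls). For a finite or infinite sequence $(a_k)_k$ of distinct points, the cover trees are $\mathcal{C}_1=\mathrm{cone}(a_1;0)$ and $\mathcal{C}_k=\mathcal{C}_{k-1}\cup\mathrm{cone}(a_k;L_k)$ with $L_k=\min\{\ell\in\mathbb{N}:\text{no ball of radius }2^{-\ell}\text{ in }\mathcal{C}_{k-1}\text{ contains }a_k\}$; the cover tree for $\{a_1,\dots,a_k\}$ is $\mathcal{C}_k$. A cover-tree neighbor map for $\mathcal{C}_k$ is a map $\mathfrak{c}_k:\mathcal{X}\setminus\{a_1,\dots,a_k\}\to\mathcal{C}_k$ such that $\mathfrak{c}_k(x)=B(a,r)$ implies $x\in B(a,2r)$ and $r/2\le\rho(x,\{a_1,\dots,a_k\})<r$. For a set $U$ and $s>0$, $E_n^{U,s}=\{\rho(X_n,\tilde X_n)\ge s\}\cap\{X_n\in U\}$. *)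

From mathcomp Require Import all_boot all_order all_algebra.
From mathcomp Require Import all_classical reals.
Set Implicit Arguments. Unset Strict Implicit. Unset Printing Implicit Defensive.
Import Order.TTheory GRing.Theory Num.Theory.
Local Open Scope ring_scope.
Local Open Scope classical_set_scope.

Section Defs.
Context {R : realType} {T : eqType}.
Variable rho : T -> T -> R.

Definition is_metric : Prop :=
  (forall x y, rho x y = 0 <-> x = y) /\
  (forall x y, rho x y = rho y x) /\
  (forall x y z, rho x z <= rho x y + rho y z).

Definition unit_diameter : Prop :=
  (forall x y, rho x y <= 1) /\
  (forall e : R, 0 < e -> exists x y, 1 - e < rho x y).

Definition radius (l : nat) : R := 2 ^- l.

Definition ball_set (a : T) (r : R) : set T := [set x | rho a x < r].

(* A ball B(a, 2^-l) is represented by the pair (a, l). *)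
Definition cone (x : T) (L : nat) : set (T * nat) :=
  [set p | p.1 = x /\ (L <= p.2)%N].

Definition is_level (C : set (T * nat)) (a : T) (L : nat) : Prop :=
  (1 <= L)%N /\
  ~ (exists b, C (b, L) /\ rho b a < radius L) /\
  (forall l, (1 <= l)%N -> (l < L)%N -> exists b, C (b, l) /\ rho b a < radius l).

Inductive cover_tree : seq T -> set (T * nat) -> Prop :=
| ct_one a : cover_tree [:: a] (cone a 0)
| ct_step s a C L : cover_tree s C -> is_level C a L ->
    cover_tree (rcons s a) (C `|` cone a L).

(* cover-tree neighbor map for the cover tree C of {a_1,...,a_k} = s:
   c x = B(a, r) with B(a,r) in C, x in B(a, 2r), and
   r/2 <= rho(x, s) < r  (rho(x,s) = min_{a in s} rho x a, written out) *)
Definition ct_nbr_map (s : seq T) (C : set (T * nat)) (c : T -> T * nat) : Prop :=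
  forall x, x \notin s ->
    C (c x) /\
    rho (c x).1 x < 2 * radius (c x).2 /\
    (forall a, a \in s -> radius (c x).2 / 2 <= rho x a) /\
    (exists2 a, a \in s & rho x a < radius (c x).2).

Definition is_nn (X : nat -> T) (n : nat) (y : T) : Prop :=
  (exists2 m, (m < n)%N & y = X m) /\
  (forall m, (m < n)%N -> rho (X n) y <= rho (X n) (X m)).

End Defs.

Definition indicated {T : eqType} (X : nat -> T) (I : nat -> bool) (n : nat) : seq T :=
  undup [seq X m | m <- iota 0 n & I m].

Section Events.
Context {R : realType} {T : eqType} {Omega : Type}.
Variables (rho : T -> T -> R) (X Xt : Omega -> nat -> T).

Definition nbr_event (C : Omega -> set (T * nat)) (c : Omega -> T -> T * nat)
  (n : nat) (B : T * nat) : set Omega :=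
  [set w | C w B /\
     (forall m, (m < n)%N -> radius B.2 / 2 <= rho (X w n) (X w m)) /\
     c w (X w n) = B].

Definition E_event (n : nat) (U : set T) (s : R) : set Omega :=
  [set w | s <= rho (X w n) (Xt w n) /\ U (X w n)].

End Events.

From mathcomp Require Import all_boot all_order all_algebra.
From mathcomp Require Import all_classical reals.
Import Order.TTheory GRing.Theory Num.Theory.
Set Implicit Arguments. Unset Strict Implicit. Unset Printing Implicit Defensive.
Local Open Scope ring_scope.
Local Open Scope classical_set_scope.

(* If the nearest neighbor of X_n is a point of the cover tree, the bound
   r/2 <= rho(X_n, a) that the neighbor map c(X_n) = B(a', r) gives for every
   tree point a transfers to every past point, because the nearest neighbor is
   the closest past point. *)

Section NearestNeighbor.
Variables (R : realType) (T : eqType) (rho : T -> T -> R).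
Variables (X : nat -> T) (n : nat) (y : T).
Hypothesis nn_y : is_nn rho X n y.

Lemma is_nn_dist_ge (r : R) m :
  r <= rho (X n) y -> (m < n)%N -> r <= rho (X n) (X m).
Proof. by case: nn_y => _ nn_min r_le lt_mn; exact: le_trans r_le (nn_min m lt_mn). Qed.

Lemma is_nn_dist_le (r : R) :
  (forall m, (m < n)%N -> r <= rho (X n) (X m)) -> r <= rho (X n) y.
Proof. by case: nn_y => -[m lt_mn ->] _; apply. Qed.

End NearestNeighbor.

Section NeighborMap.
Variables (R : realType) (T : eqType) (rho : T -> T -> R).
Variables (s : seq T) (C : set (T * nat)) (c : T -> T * nat).
Hypothesis c_nbr : ct_nbr_map rho s C c.

Lemma ct_nbr_map_in_tree x : x \notin s -> C (c x).
Proof. by case/c_nbr. Qed.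

Lemma ct_nbr_map_in_ball x : x \notin s -> rho (c x).1 x < 2 * radius (c x).2.
Proof. by case/c_nbr => _ []. Qed.

Lemma ct_nbr_map_dist_ge x a :
  x \notin s -> a \in s -> radius (c x).2 / 2 <= rho x a.
Proof. by move=> /c_nbr [_ [_ [lb _]]]; exact: lb. Qed.

Lemma ct_nbr_map_nn_dist_ge (X : nat -> T) n y m :
  is_nn rho X n y -> X n \notin s -> y \in s -> (m < n)%N ->
  radius (c (X n)).2 / 2 <= rho (X n) (X m).
Proof.
by move=> nn_y Xn_out y_in; apply: (is_nn_dist_ge nn_y); exact: ct_nbr_map_dist_ge.
Qed.

End NeighborMap.

Theorem lemma6 (R : realType) (T : eqType) (rho : T -> T -> R) (Omega : Type)
  (X Xt : Omega -> nat -> T) (I : Omega -> nat -> bool) (n : nat)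
  (C : Omega -> set (T * nat)) (c : Omega -> T -> T * nat) :
  is_metric rho -> unit_diameter rho ->
  (forall w k, (1 <= k)%N -> is_nn rho (X w) k (Xt w k)) ->
  (1 <= n)%N ->
  (forall w, cover_tree rho (indicated (X w) (I w) n) (C w)) ->
  (forall w, ct_nbr_map rho (indicated (X w) (I w) n) (C w) (c w)) ->
  (forall w, X w n \notin indicated (X w) (I w) n) ->
  [set w | Xt w n \in indicated (X w) (I w) n] `<=`
    \bigcup_(B : T * nat) nbr_event rho X C c n B
  /\ (forall B : T * nat,
        nbr_event rho X C c n B `<=`
        E_event rho X Xt n (ball_set rho B.1 (2 * @radius R B.2)) (@radius R B.2 / 2)).
Proof.
move=> _ _ Xt_nn n_gt0 _ c_nbr Xn_out; split.
- move=> w /= Xt_in; exists (c w (X w n)) => //; split.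
    exact: ct_nbr_map_in_tree (c_nbr w) _ (Xn_out w).
  split=> // m lt_mn.
  exact: (ct_nbr_map_nn_dist_ge (c_nbr w) (Xt_nn w n n_gt0) (Xn_out w) Xt_in lt_mn).
- move=> B w [_ [far_past cXn]]; split.
    exact (is_nn_dist_le (Xt_nn w n n_gt0) far_past).
  by rewrite -cXn; exact: ct_nbr_map_in_ball (c_nbr w) _ (Xn_out w).
Qed.
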